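(* Let $\rho:\mathbb{Z}\to[0,\infty)$ be a weight with finite moments, $f,g$ polynomials with $\deg f\le2$, $\deg g\le1$, $f(x+1)\rho(x+1)-f(x)\rho(x)=g(x)\rho(x)$ on $\mathbb{Z}$, and $\rho f$ vanishing at the end points of the support of $\rho$. Let $\{p_n\}$ be the monic orthogonal polynomials for $\rho$ with $\sum_xp_mp_n\rho=h_n\delta_{nm}$, $h_n>0$; let $\mathcal{A}_{\rm l}=g(x)T+f(x)(\Delta+\nabla)$, $c_n:=-\sum_xp_{n+1}(x)(\mathcal{A}_{\rm l}p_n)(x)\rho(x)$, $\omega(x)=f(x+1)\rho(x+1)$, and assume the Pfaffians $\mathrm{Pf}[\sum_x(x^i(x+1)^j-(x+1)^ix^j)\omega(x)]_{i,j=0}^{2n-1}$ are nonzero for all $n\ge1$. Let $Q_{2n+1}=p_{2n+1}$, $Q_{2n}=\sum_{l=0}^n\big(\prod_{j=l}^{n-1}c_{2j+1}/c_{2j}\big)p_{2l}$ and $u_n=c_{2n}$, and set $t_{2m,2m-2}:=-c_{2m-1}/c_{2m-2}$. Then for all $m\ge0$ (with $Q_{-2}=0$ in (3)): (1) $p_{2m+1}(x)=Q_{2m+1}(x)$; (2) $\frac{1}{u_m}\mathcal{A}_{\rm l}Q_{2m+1}(y)=\frac{p_{2m}(y)}{h_{2m}}+t_{2m+2,2m}\frac{p_{2m+2}(y)}{h_{2m+2}}$; (3) $p_{2m}(x)=Q_{2m}(x)+t_{2m,2m-2}Q_{2m-2}(x)$; (4) $\frac{1}{u_m}\mathcal{A}_{\rm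 l}Q_{2m}(y)=-\frac{p_{2m+1}(y)}{h_{2m+1}}$.
   Context: $T\phi(x)=\phi(x+1)$, $\Delta\phi(x)=\phi(x+1)-\phi(x)$, $\nabla\phi(x)=\phi(x)-\phi(x-1)$. The $Q_k$ are skew orthogonal for $\langle\phi,\psi\rangle_{s,\omega}=\sum_{x\in\mathbb{Z}}[\phi(x)\psi(x+1)-\phi(x+1)\psi(x)]\omega(x)$ with $\langle Q_{2n},Q_{2m+1}\rangle_{s,\omega}=u_n\delta_{nm}$. *)

From HB Require Import structures.
From mathcomp Require Import all_boot all_order all_algebra all_fingroup.
From mathcomp Require Import all_classical all_reals.
From mathcomp Require Import topology normedtype sequences.
Set Implicit Arguments. Unset Strict Implicit. Unset Printing Implicit Defensive.
Import Order.TTheory GRing.Theory Num.Theory.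
Import numFieldTopology.Exports numFieldNormedType.Exports.
Local Open Scope ring_scope.
Local Open Scope classical_set_scope.

Section Defs.
Variable R : realType.

(* Sum over Z of a : int -> R, as (sum over x >= 0) + (sum over x < 0).
   All sums used below are absolutely convergent by the finite-moment
   hypothesis, so this is the usual sum over Z. *)
Definition zsum (a : int -> R) : R :=
  limn (series (fun n : nat => a (n%:Z))) +
  limn (series (fun n : nat => a (- (n.+1)%:Z))).

Definition finite_moments (rho : int -> R) : Prop :=
  forall k : nat,
    cvgn (series (fun n : nat => (n%:R) ^+ k * rho (n%:Z))) /\
    cvgn (series (fun n : nat => (n.+1%:R) ^+ k * rho (- (n.+1)%:Z))).

(* rho f vanishes at the end points of the support of rho:
   at a finite left end point a (rho(a-1) = 0) we have f(a) rho(a) = 0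
   (at a finite right end point b the boundary value f(b+1)rho(b+1) is 0
   since rho(b+1) = 0), and at infinite end points f rho tends to 0. *)
Definition vanish_at_endpoints (rho : int -> R) (f : {poly R}) : Prop :=
  [/\ forall x : int, rho (x - 1) = 0 -> f.[x%:~R] * rho x = 0,
      (fun n : nat => f.[n%:R] * rho (n%:Z)) @ \oo --> (0 : R) &
      (fun n : nat => f.[- (n%:R)] * rho (- (n%:Z))) @ \oo --> (0 : R)].

Definition Al (f g P : {poly R}) (y : R) : R :=
  g.[y] * P.[y + 1] + f.[y] * ((P.[y + 1] - P.[y]) + (P.[y] - P.[y - 1])).

Definition hnorm (rho : int -> R) (p : nat -> {poly R}) (n : nat) : R :=
  zsum (fun x => (p n).[x%:~R] * (p n).[x%:~R] * rho x).

Definition cc (rho : int -> R) (f g : {poly R}) (p : nat -> {poly R}) (n : nat) : R :=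
  - zsum (fun x => (p n.+1).[x%:~R] * Al f g (p n) (x%:~R) * rho x).

Definition omega (rho : int -> R) (f : {poly R}) (x : int) : R :=
  f.[(x + 1)%:~R] * rho (x + 1).

Definition skew_moments (rho : int -> R) (f : {poly R}) (m : nat) : 'M[R]_m :=
  \matrix_(i < m, j < m)
    zsum (fun x => ((x%:~R) ^+ i * (x%:~R + 1) ^+ j - (x%:~R + 1) ^+ i * (x%:~R) ^+ j)
                   * omega rho f x).

End Defs.

(* Pfaffian of a 2n x 2n matrix:
   Pf(A) = 1/(2^n n!) sum_{s in S_{2n}} sgn(s) prod_{i<n} A_{s(2i), s(2i+1)}. *)
Definition pf_fst (n : nat) (i : 'I_n) : 'I_(n.*2) :=
  Ordinal (etrans (ltn_double i n) (ltn_ord i)).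
Definition pf_snd (n : nat) (i : 'I_n) : 'I_(n.*2) :=
  Ordinal (etrans (ltn_Sdouble i n) (ltn_ord i)).

Definition pfaffian (R : fieldType) (n : nat) (A : 'M[R]_(n.*2)) : R :=
  (\sum_(s : 'S_(n.*2))
      (-1) ^+ s * \prod_(i < n) A (s (pf_fst i)) (s (pf_snd i)))
  / (2 ^ n * n`!)%:R.

Section Q.
Variable R : realType.
Variables (rho : int -> R) (f g : {poly R}) (p : nat -> {poly R}).
Local Notation c := (cc rho f g p).

Definition Qeven (n : nat) : {poly R} :=
  \sum_(0 <= l < n.+1) (\prod_(l <= j < n) (c j.*2.+1 / c j.*2)) *: p l.*2.
Definition Qodd (n : nat) : {poly R} := p n.*2.+1.
Definition Q (k : nat) : {poly R} := if odd k then Qodd k./2 else Qeven k./2.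

Definition u (n : nat) : R := c n.*2.
Definition tt (m : nat) : R := - c m.*2.-1 / c m.*2.-2.
End Q.

From HB Require Import structures.
From mathcomp Require Import all_boot all_order all_algebra all_fingroup.
From mathcomp Require Import all_classical all_reals.
From mathcomp Require Import topology normedtype sequences.
From mathcomp Require Import zify ring lra.
Set Implicit Arguments. Unset Strict Implicit. Unset Printing Implicit Defensive.
Import Order.TTheory GRing.Theory Num.Theory.
Import numFieldTopology.Exports numFieldNormedType.Exports.
Local Open Scope ring_scope.

(* The proof rests on one computation: by the Pearson equation and a summation
   by parts, <P, A_l Q>_rho equals the skew product <P, Q>_{s,omega}, so
   (P, Q) |-> <P, A_l Q>_rho is antisymmetric.  Since A_l raises degrees by at
   most one, expanding A_l p_n in the orthogonal basis leaves only two terms,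
     A_l p_n = - c_n / h_{n+1} p_{n+1} + c_{n-1} / h_{n-1} p_{n-1}.
   If c_{2k} vanished, p_{2k+1} would be skew-orthogonal to every polynomial of
   degree < 2k+2; writing p_{2k+1} in the monomial basis then shows that the
   Pfaffian of the skew moment matrix of size 2k+2 vanishes.  Hence c_{2k} <> 0,
   and the four identities follow from the two-term formula, the even ones by
   induction along the recursive definition of Q_{2n}. *)

Section ZSum.
Local Open Scope classical_set_scope.
Variable R : realType.
Implicit Types a b : int -> R.

Definition zsummable a : Prop :=
  cvgn (series (fun n : nat => a n%:Z)) /\
  cvgn (series (fun n : nat => a (- (n.+1)%:Z))).

Lemma zsummableD a b : zsummable a -> zsummable b -> zsummable (fun x => a x + b x).
Proof. by move=> [a1 a2] [b1 b2]; split; apply: is_cvg_seriesD. Qed.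

Lemma zsummableZ k a : zsummable a -> zsummable (fun x => k * a x).
Proof. by move=> [a1 a2]; split; apply: is_cvg_seriesZ. Qed.

Lemma zsummable0 : zsummable (fun=> 0).
Proof.
have series0 : series (fun=> 0 : R) = cst 0 by apply/funext => n; rewrite /series /= big1.
by split; rewrite /= series0; exact: is_cvg_cst.
Qed.

Lemma zsummable_sum (I : Type) (r : seq I) (F : I -> int -> R) :
  (forall i, zsummable (F i)) -> zsummable (fun x => \sum_(i <- r) F i x).
Proof.
move=> sF; elim: r => [|i r IHr].
  rewrite (_ : (fun x => _) = fun=> 0); first exact: zsummable0.
  by apply/funext => x; rewrite big_nil.
rewrite (_ : (fun x => _) = fun x => F i x + \sum_(j <- r) F j x); last first.
  by apply/funext => x; rewrite big_cons.
exact: zsummableD.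
Qed.

Lemma zsumD a b : zsummable a -> zsummable b ->
  zsum (fun x => a x + b x) = zsum a + zsum b.
Proof. by move=> [a1 a2] [b1 b2]; rewrite /zsum lim_seriesD // lim_seriesD // addrACA. Qed.

Lemma zsumZ k a : zsummable a -> zsum (fun x => k * a x) = k * zsum a.
Proof. by move=> [a1 a2]; rewrite /zsum (lim_seriesZ k a1) (lim_seriesZ k a2) mulrDr. Qed.

Section Telescope.
Variable a : int -> R.
Hypothesis a_sum : zsummable a.

Let a_cvg0 : (fun n : nat => a n%:Z) @ \oo --> 0.
Proof. exact: cvg_series_cvg_0 a_sum.1. Qed.

Let aN_cvg0 : (fun n : nat => a (- n%:Z)) @ \oo --> 0.
Proof. by rewrite -cvg_shiftS; exact: cvg_series_cvg_0 a_sum.2. Qed.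

Let series_telescope_pos :
  series (fun n : nat => a (n%:Z + 1) - a n) @ \oo --> - a 0.
Proof.
have -> : series (fun n : nat => a (n%:Z + 1) - a n) = (fun N : nat => a N - a 0).
  apply: funext => N; rewrite /series /=.
  by apply: (telescope_sumr_eq (fun k : nat => a k)) => // k _; rewrite -addn1 PoszD.
suff: (fun N : nat => a N - a 0) @ \oo --> 0 - a 0 by rewrite sub0r.
by apply: cvgB => //; exact: cvg_cst.
Qed.

Let series_telescope_neg :
  series (fun n : nat => a (- (n.+1)%:Z + 1) - a (- (n.+1)%:Z)) @ \oo --> a 0.
Proof.
have -> : series (fun n : nat => a (- (n.+1)%:Z + 1) - a (- (n.+1)%:Z)) =
    (fun N : nat => a 0 - a (- N%:Z)).
  apply: funext => N; rewrite /series /= (telescope_sumr_eq (fun k : nat => - a (- k%:Z))) //.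
    by rewrite opprK addrC.
  by move=> k _; rewrite opprK addrC; congr (_ + a _); lia.
suff: (fun N : nat => a 0 - a (- N%:Z)) @ \oo --> a 0 - 0 by rewrite subr0.
by apply: cvgB => //; exact: cvg_cst.
Qed.

Lemma zsummable_telescope : zsummable (fun x => a (x + 1) - a x).
Proof.
by split; apply/cvg_ex; eexists; [exact: series_telescope_pos | exact: series_telescope_neg].
Qed.

Lemma zsum_telescope : zsum (fun x => a (x + 1) - a x) = 0.
Proof.
by rewrite /zsum (cvg_lim _ series_telescope_pos) // (cvg_lim _ series_telescope_neg) // addNr.
Qed.

End Telescope.
End ZSum.

Section Moments.
Variables (R : realType) (rho : int -> R).
Hypothesis rho_mom : finite_moments rho.

Lemma zsummable_moment i : zsummable (fun x => x%:~R ^+ i * rho x).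
Proof.
split; first exact: (rho_mom i).1.
have -> : (fun n : nat => (- (n.+1)%:Z)%:~R ^+ i * rho (- (n.+1)%:Z)) =
    (fun n => (-1) ^+ i * ((n.+1)%:R ^+ i * rho (- (n.+1)%:Z))).
  by apply/funext => n; rewrite mulrA -exprNn mulrNz.
exact: (is_cvg_seriesZ (k := (-1) ^+ i) (rho_mom i).2).
Qed.

Lemma zsummable_poly P : zsummable (fun x => P.[x%:~R] * rho x).
Proof.
have -> : (fun x => P.[x%:~R] * rho x) =
    (fun x => \sum_(i < size P) P`_i * (x%:~R ^+ i * rho x)).
  by apply/funext => x; rewrite horner_coef mulr_suml; apply: eq_bigr => i _; rewrite mulrA.
by apply: zsummable_sum => i; apply/zsummableZ/zsummable_moment.
Qed.

End Moments.

Section ShiftOperator.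
Variable R : idomainType.
Implicit Types f g P Q : {poly R}.

Definition Al_poly f g P : {poly R} :=
  g * (P \Po ('X + 1)) + f * ((P \Po ('X + 1)) - (P \Po ('X - 1))).

Lemma horner_comp_XaddC1 P y : (P \Po ('X + 1)).[y] = P.[y + 1].
Proof. by rewrite horner_comp !hornerE. Qed.

Lemma horner_comp_XsubC1 P y : (P \Po ('X - 1)).[y] = P.[y - 1].
Proof. by rewrite horner_comp !hornerE. Qed.

Lemma Al_polyD f g a P Q : Al_poly f g (a *: P + Q) = a *: Al_poly f g P + Al_poly f g Q.
Proof. by rewrite /Al_poly !comp_polyD !comp_polyZ -!mul_polyC; ring. Qed.

Lemma Al_poly0 f g : Al_poly f g 0 = 0.
Proof. by rewrite /Al_poly !comp_poly0 subrr !mulr0 addr0. Qed.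

Lemma size_comp_shift_sub P :
  (size ((P \Po ('X + 1)) - (P \Po ('X - 1)))%R <= (size P).-1)%N.
Proof.
have sXD : size ('X + 1 : {poly R}) = 2 by rewrite -polyC1 size_XaddC.
have sXB : size ('X - 1 : {poly R}) = 2 by rewrite -polyC1 size_XsubC.
have lcP1 : (P \Po ('X + 1))`_(size P).-1 = lead_coef P.
  rewrite -(size_comp_poly2 P sXD) -lead_coefE lead_coef_comp ?sXD //.
  by rewrite -polyC1 lead_coefXaddC expr1n mulr1.
have lcP2 : (P \Po ('X - 1))`_(size P).-1 = lead_coef P.
  rewrite -(size_comp_poly2 P sXB) -lead_coefE lead_coef_comp ?sXB //.
  by rewrite -polyC1 lead_coefXsubC expr1n mulr1.
apply/leq_sizeP => j hj; rewrite coefB.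
have [->|hjP] := eqVneq j (size P).-1; first by rewrite lcP1 lcP2 subrr.
have hPj : (size P <= j)%N by lia.
by rewrite !nth_default ?subrr ?size_comp_poly2.
Qed.

Lemma size_Al_poly f g P :
  (size f <= 3)%N -> (size g <= 2)%N -> (size (Al_poly f g P) <= (size P).+1)%N.
Proof.
move=> sf sg; have [->|P_neq0] := eqVneq P 0; first by rewrite Al_poly0 size_poly0.
have sP : (0 < size P)%N by rewrite size_poly_gt0.
have sPD : size (P \Po ('X + 1)) = size P by rewrite size_comp_poly2 // -polyC1 size_XaddC.
apply: leq_trans (size_polyD _ _) _; rewrite geq_max.
apply/andP; split; apply: leq_trans (size_polyMleq _ _) _.
  by rewrite sPD; lia.
by have := size_comp_shift_sub P; lia.
Qed.

End ShiftOperator.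

Section Pearson.
Variables (R : realType) (rho : int -> R) (f g : {poly R}).
Hypothesis rho_mom : finite_moments rho.
Hypothesis pearson : forall x : int,
  f.[(x + 1)%:~R] * rho (x + 1) - f.[x%:~R] * rho x = g.[x%:~R] * rho x.
Implicit Types P Q : {poly R}.
Local Notation A := (Al_poly f g).

Lemma horner_Al_poly P y : (A P).[y] = Al f g P y.
Proof.
rewrite /Al_poly !(hornerD, hornerN, hornerM, horner_comp_XaddC1, horner_comp_XsubC1).
by rewrite /Al; ring.
Qed.

Definition wdot P Q : R := zsum (fun x => P.[x%:~R] * Q.[x%:~R] * rho x).

Definition sdot P Q : R := wdot P (A Q).

Lemma zsummable_wdot P Q : zsummable (fun x => P.[x%:~R] * Q.[x%:~R] * rho x).
Proof.
have -> : (fun x => P.[x%:~R] * Q.[x%:~R] * rho x) = (fun x => (P * Q).[x%:~R] * rho x).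
  by apply/funext => x; rewrite hornerM.
exact: zsummable_poly.
Qed.

Lemma wdotC P Q : wdot P Q = wdot Q P.
Proof. by congr zsum; apply/funext => x; rewrite (mulrC P.[_]). Qed.

Lemma wdot_linear_r P a Q1 Q2 : wdot P (a *: Q1 + Q2) = a * wdot P Q1 + wdot P Q2.
Proof.
rewrite /wdot -(zsumZ a (zsummable_wdot P Q1)).
rewrite -(zsumD (zsummableZ a (zsummable_wdot P Q1)) (zsummable_wdot P Q2)).
by congr zsum; apply/funext => x; rewrite hornerD hornerZ; ring.
Qed.

Lemma wdot_linear_l P a Q1 Q2 : wdot (a *: Q1 + Q2) P = a * wdot Q1 P + wdot Q2 P.
Proof. by rewrite wdotC wdot_linear_r !(wdotC P). Qed.

Lemma wdot0r P : wdot P 0 = 0.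
Proof. by have := wdot_linear_r P 1 0 0; rewrite scaler0 addr0 mul1r; lra. Qed.

Lemma wdotZr P a Q : wdot P (a *: Q) = a * wdot P Q.
Proof. by rewrite -[a *: Q]addr0 wdot_linear_r wdot0r addr0. Qed.

Lemma wdotBr P Q1 Q2 : wdot P (Q1 - Q2) = wdot P Q1 - wdot P Q2.
Proof. by rewrite addrC -scaleN1r wdot_linear_r mulN1r addrC. Qed.

Lemma sdot_linear_l a P1 P2 Q : sdot (a *: P1 + P2) Q = a * sdot P1 Q + sdot P2 Q.
Proof. exact: wdot_linear_l. Qed.

Lemma sdot_linear_r a Q1 Q2 P : sdot P (a *: Q1 + Q2) = a * sdot P Q1 + sdot P Q2.
Proof. by rewrite /sdot Al_polyD wdot_linear_r. Qed.

Lemma omegaE x : omega rho f x = (f.[x%:~R] + g.[x%:~R]) * rho x.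
Proof. by rewrite /omega mulrDl -pearson; ring. Qed.

Lemma sdot_omega P Q : sdot P Q =
  zsum (fun x => (P.[x%:~R] * Q.[x%:~R + 1] - P.[x%:~R + 1] * Q.[x%:~R]) * omega rho f x).
Proof.
symmetry.
(* Summation by parts: the two sides differ by the telescoping sum of [a]. *)
pose T := f * P * (Q \Po ('X - 1)).
pose a x := T.[x%:~R] * rho x.
have a_shift x : a (x + 1) = omega rho f x * (P.[x%:~R + 1] * Q.[x%:~R]).
  by rewrite /a /T /omega intrD mulr1z !(hornerM, horner_comp_XsubC1) addrK; ring.
have a_sum : zsummable a := zsummable_poly rho_mom T.
transitivity (zsum (fun x => P.[x%:~R] * (A Q).[x%:~R] * rho x + (-1) * (a (x + 1) - a x))).
  congr zsum; apply/funext => x.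
  rewrite a_shift omegaE horner_Al_poly /Al /a /T.
  by rewrite !(hornerD, hornerN, hornerM, horner_comp_XsubC1); ring.
rewrite (zsumD (zsummable_wdot P (A Q)) (zsummableZ (-1) (zsummable_telescope a_sum))).
by rewrite (zsumZ _ (zsummable_telescope a_sum)) (zsum_telescope a_sum) mulr0 addr0.
Qed.

Lemma sdot_antisym P Q : sdot P Q = - sdot Q P.
Proof.
have skew_sum : zsummable
    (fun x => (Q.[x%:~R] * P.[x%:~R + 1] - Q.[x%:~R + 1] * P.[x%:~R]) * omega rho f x).
  have -> : (fun x => (Q.[x%:~R] * P.[x%:~R + 1] - Q.[x%:~R + 1] * P.[x%:~R]) * omega rho f x)
      = (fun x => ((Q * (P \Po ('X + 1)) - (Q \Po ('X + 1)) * P) * (f + g)).[x%:~R] * rho x).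
    apply/funext => x; rewrite omegaE.
    by rewrite !(hornerD, hornerN, hornerM, horner_comp_XaddC1); ring.
  exact: zsummable_poly.
rewrite !sdot_omega -mulN1r -(zsumZ _ skew_sum).
by congr zsum; apply/funext => x; ring.
Qed.

Lemma sdotxx P : sdot P P = 0.
Proof. by have := sdot_antisym P P; lra. Qed.

End Pearson.

Section PfaffianGram.
Variables (R : numFieldType) (V : lmodType R) (K : V -> V -> R).
Hypothesis K_linear_l : forall a u v w, K (a *: u + v) w = a * K u w + K v w.
Hypothesis K_linear_r : forall a u v w, K w (a *: u + v) = a * K w u + K w v.

Definition gram_mx m (v : 'I_m -> V) : 'M[R]_m := \matrix_(i, j) K (v i) (v j).

Variable n : nat.
Local Notation I := 'I_(n.*2).
Local Notation upd w r x := (@eqtype.dfwith I (fun=> V) w r x).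
Implicit Types (s : 'S_(n.*2)) (w : I -> V) (r : I).

Let K0l x : K 0 x = 0.
Proof. by have := K_linear_l (-1) 0 0 x; rewrite scaleN1r addNr mulN1r addNr. Qed.

Let K0r x : K x 0 = 0.
Proof. by have := K_linear_r (-1) 0 0 x; rewrite scaleN1r addNr mulN1r addNr. Qed.

Let pf_term s w := \prod_(i < n) K (w (s (pf_fst i))) (w (s (pf_snd i))).

Let pf_sum w := \sum_(s : 'S_(n.*2)) (-1) ^+ s * pf_term s w.

Let pfaffian_gram_mx w : pfaffian (gram_mx w) = pf_sum w / (2 ^ n * n`!)%:R.
Proof.
rewrite /pfaffian; congr (_ / _); apply: eq_bigr => s _; congr (_ * _).
by apply: eq_bigr => i _; rewrite mxE.
Qed.

Let pf_pair s r : 'I_n := Ordinal (etrans (ltn_half_double _ _) (ltn_ord ((s^-1)%g r))).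

Let pf_pairP s r i : ((s (pf_fst i) == r) || (s (pf_snd i) == r)) = (i == pf_pair s r).
Proof.
have sE x : (s x == r) = (x == (s^-1)%g r).
  by apply/eqP/eqP => [<-|->]; rewrite ?permK ?permKV.
rewrite !sE -!val_eqE /=; set j := val _.
case: (odd j) (odd_double_half j) => /= hj; apply/orP/eqP => [[]/eqP|hi]; lia.
Qed.

Let pf_term_dfwith s w r : exists2 b, b != r & exists C : R,
  (forall x, pf_term s (upd w r x) = K x (w b) * C) \/
  (forall x, pf_term s (upd w r x) = K (w b) x * C).
Proof.
set i0 := pf_pair s r.
pose C := \prod_(i < n | i != i0) K (w (s (pf_fst i))) (w (s (pf_snd i))).
have split_term x : pf_term s (upd w r x) =
    K (upd w r x (s (pf_fst i0))) (upd w r x (s (pf_snd i0))) * C.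
  rewrite /pf_term (bigD1 i0) //=; congr (_ * _); apply: eq_bigr => i.
  by rewrite -pf_pairP negb_or => /andP[h1 h2]; rewrite !dfwith_out // eq_sym.
have neq_pair : s (pf_fst i0) != s (pf_snd i0).
  by rewrite (inj_eq perm_inj); apply/eqP => /(congr1 val) /=; exact: n_Sn.
have := pf_pairP s r i0; rewrite eqxx => /orP[] /eqP e.
- exists (s (pf_snd i0)); first by rewrite -e eq_sym.
  by exists C; left => x; rewrite split_term e dfwith_in dfwith_out // -e.
- exists (s (pf_fst i0)); first by rewrite -e.
  by exists C; right => x; rewrite split_term e dfwith_in dfwith_out // -e eq_sym.
Qed.

Let pf_sum_linear w r a u v :
  pf_sum (upd w r (a *: u + v)) = a * pf_sum (upd w r u) + pf_sum (upd w r v).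
Proof.
rewrite /pf_sum mulr_sumr -big_split; apply: eq_bigr => s _ /=.
have [b _ [C [E|E]]] := pf_term_dfwith s w r; rewrite !E ?K_linear_l ?K_linear_r.
all: by move: ((-1) ^+ s) => sg; ring.
Qed.

Let pf_sum_orth w r q : (forall t, t != r -> K q (w t) = 0 /\ K (w t) q = 0) ->
  pf_sum (upd w r q) = 0.
Proof.
move=> q_orth; rewrite /pf_sum big1 // => s _.
have [b /q_orth[qb bq] [C [E|E]]] := pf_term_dfwith s w r.
  by rewrite E qb mul0r mulr0.
by rewrite E bq mul0r mulr0.
Qed.

Let pf_sum_alt w a b : a != b -> w a = w b -> pf_sum w = 0.
Proof.
move=> neq_ab eq_w.
have w_tperm x : w (tperm a b x) = w x by case: tpermP => // ->.
suff: pf_sum w = - pf_sum w by move/eqP; rewrite eq_sym eqNr => /eqP.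
rewrite {1}/pf_sum (reindex_inj (mulIg (tperm a b))) /= -sumrN; apply: eq_bigr => s _.
rewrite odd_permM odd_tperm neq_ab signr_addb expr1 mulrN1 mulNr; congr (- (_ * _)).
by apply: eq_bigr => i _; rewrite !permM !w_tperm.
Qed.

(* Putting q in slot r leaves the Pfaffian unchanged (by multilinearity, the other
   summands of q create a repeated vector), and then each of its terms has a
   factor K q _ or K _ q. *)
Lemma pfaffian_gram_mx_eq0 (w : I -> V) r q (d : I -> R) :
  q = \sum_t d t *: w t -> d r = 1 ->
  (forall t, t != r -> K q (w t) = 0 /\ K (w t) q = 0) ->
  pfaffian (gram_mx w) = 0.
Proof.
move=> q_def d_r q_orth; rewrite pfaffian_gram_mx.
have sum_linear (ts : seq I) : pf_sum (upd w r (\sum_(t <- ts) d t *: w t)) =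
    \sum_(t <- ts) d t * pf_sum (upd w r (w t)).
  elim: ts => [|t ts IH]; rewrite ?big_nil ?big_cons.
    by apply: pf_sum_orth => t _; rewrite K0l K0r.
  by rewrite pf_sum_linear IH.
have := pf_sum_orth q_orth; rewrite q_def sum_linear (bigD1 r) //= big1 ?addr0.
  have -> : upd w r (w r) = w by apply/funext => t; case: eqtype.dfwithP.
  by rewrite d_r mul1r => ->; rewrite mul0r.
move=> t neq_tr; rewrite (@pf_sum_alt _ t r) ?mulr0 //.
by rewrite dfwith_in dfwith_out // eq_sym.
Qed.

End PfaffianGram.

Section QRecursion.
Variables (R : realType) (rho : int -> R) (f g : {poly R}) (p : nat -> {poly R}).
Local Notation c := (cc rho f g p).
Local Notation Qeven := (Qeven rho f g p).

Lemma Q_odd m : Q rho f g p m.*2.+1 = p m.*2.+1.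
Proof. by rewrite /Q /Qodd /= odd_double /= uphalf_double. Qed.

Lemma Q_even m : Q rho f g p m.*2 = Qeven m.
Proof. by rewrite /Q odd_double doubleK. Qed.

Lemma Qeven0 : Qeven 0 = p 0.
Proof. by rewrite /Qeven big_nat1 big_geq // scale1r. Qed.

Lemma QevenS m : Qeven m.+1 = p m.+1.*2 + (c m.*2.+1 / c m.*2) *: Qeven m.
Proof.
rewrite /Qeven big_nat_recr //= [X in X *: p _]big_geq // scale1r addrC scaler_sumr.
congr (_ + _); apply: eq_big_nat => l /andP[_]; rewrite ltnS => le_lm.
by rewrite (big_nat_recr _ _ _ le_lm) /= scalerA mulrC.
Qed.

End QRecursion.

Section OrthogonalPolynomials.
Variables (R : realType) (rho : int -> R) (p : nat -> {poly R}).
Hypothesis rho_mom : finite_moments rho.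
Hypothesis p_monic : forall n, p n \is monic.
Hypothesis p_size : forall n, size (p n) = n.+1.
Hypothesis p_orth : forall m n, m != n -> wdot rho (p m) (p n) = 0.
Hypothesis h_pos : forall n, 0 < hnorm rho p n.
Local Notation h := (hnorm rho p).
Local Notation wdot := (wdot rho).
Implicit Types P : {poly R}.

Lemma hnorm_neq0 n : h n != 0.
Proof. exact: lt0r_neq0. Qed.

Lemma wdot_pp i j : wdot (p i) (p j) = if i == j then h i else 0.
Proof. by case: eqVneq => [->|/p_orth]. Qed.

Lemma coef_p_diag k : (p k)`_k = 1.
Proof. by rewrite -[k in _`_k]/(k.+1.-1) -(p_size k); exact/monicP. Qed.

Lemma size_sub_coef_p P k : (size P <= k.+1)%N -> (size (P - P`_k *: p k)%R <= k)%N.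
Proof.
move=> sP; apply/leq_sizeP => j le_kj; rewrite coefB coefZ.
have [lt_kj|->] : (k < j)%N \/ j = k by lia.
  have sPj : (size P <= j)%N by lia.
  have spj : (size (p k) <= j)%N by rewrite p_size.
  by rewrite (nth_default _ sPj) (nth_default _ spj) mulr0 subr0.
by rewrite coef_p_diag mulr1 subrr.
Qed.

Lemma wdot_p_deg_lt n P : (size P <= n)%N -> wdot (p n) P = 0.
Proof.
suff small k : (k <= n)%N -> forall P, (size P <= k)%N -> wdot (p n) P = 0 by exact: small.
elim: k => [|k IHk] le_kn Q sQ.
  by move: sQ; rewrite leqn0 size_poly_eq0 => /eqP ->; exact: (wdot0r rho_mom).
have -> : Q = Q`_k *: p k + (Q - Q`_k *: p k) by rewrite addrC subrK.
rewrite (wdot_linear_r rho_mom) p_orth ?mulr0 ?add0r; last lia.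
by apply: IHk; [lia | exact: size_sub_coef_p].
Qed.

Lemma orth_poly_eq0 N P :
  (size P <= N)%N -> (forall j, (j < N)%N -> wdot (p j) P = 0) -> P = 0.
Proof.
elim: N P => [|N IHN] P sP P_orth.
  by move: sP; rewrite leqn0 size_poly_eq0 => /eqP.
have P_eq : P = P`_N *: p N.
  apply/eqP; rewrite -subr_eq0; apply/eqP/IHN; first exact: size_sub_coef_p.
  move=> j lt_jN; rewrite (wdotBr rho_mom) (wdotZr rho_mom).
  by rewrite P_orth ?p_orth ?mulr0 ?subr0 //; lia.
move: (P_orth N (ltnSn N)); rewrite P_eq (wdotZr rho_mom) wdot_pp eqxx => /eqP.
by rewrite mulf_eq0 (negbTE (hnorm_neq0 N)) orbF => /eqP ->; rewrite scale0r.
Qed.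

Section ThreeTermRecurrence.
Variables f g : {poly R}.
Hypothesis pearson : forall x : int,
  f.[(x + 1)%:~R] * rho (x + 1) - f.[x%:~R] * rho x = g.[x%:~R] * rho x.
Hypothesis deg_f : (size f <= 3)%N.
Hypothesis deg_g : (size g <= 2)%N.
Local Notation A := (Al_poly f g).
Local Notation sdot := (sdot rho f g).
Local Notation c := (cc rho f g p).

Lemma sdot_p_far a b : (b.+1 < a)%N -> sdot (p a) (p b) = 0.
Proof.
move=> lt_ba; apply: wdot_p_deg_lt.
by apply: leq_trans (size_Al_poly _ deg_f deg_g) _; rewrite p_size.
Qed.

Lemma cc_sdot n : c n = sdot (p n) (p n.+1).
Proof.
rewrite (sdot_antisym rho_mom pearson); congr (- zsum _).
by apply/funext => x; rewrite horner_Al_poly.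
Qed.

Lemma Al_poly_p n : A (p n) =
  (- c n / h n.+1) *: p n.+1 + (if n is n'.+1 then (c n' / h n') *: p n' else 0).
Proof.
apply/eqP; rewrite -subr_eq0; apply/eqP; apply: (@orth_poly_eq0 n.+2).
  rewrite (leq_trans (size_polyD _ _)) // geq_max size_polyN.
  rewrite (leq_trans (size_Al_poly _ deg_f deg_g)) ?p_size //=.
  rewrite (leq_trans (size_polyD _ _)) // geq_max (leq_trans (size_scale_leq _ _)) ?p_size //=.
  case: n => [|n]; first by rewrite size_poly0.
  by apply: leq_trans (size_scale_leq _ _) _; rewrite p_size; lia.
have h_neq0 := hnorm_neq0.
have sdot_pSp m : sdot (p m.+1) (p m) = - c m.
  by rewrite (sdot_antisym rho_mom pearson) cc_sdot.
move=> j lt_j; rewrite (wdotBr rho_mom) (wdot_linear_r rho_mom).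
apply/eqP; rewrite subr_eq0; apply/eqP.
change (wdot (p j) (A (p n))) with (sdot (p j) (p n)).
case: n lt_j => [|n] lt_j /=.
  rewrite (wdot0r rho_mom) addr0; have [->|->] : j = 0%N \/ j = 1%N by lia.
    by rewrite (sdotxx rho_mom pearson) p_orth ?mulr0.
  by rewrite sdot_pSp; change (wdot (p 1) (p 1)) with (h 1); field; rewrite h_neq0.
rewrite (wdotZr rho_mom).
have [lt_jn|[->|[->|->]]] : (j < n)%N \/ j = n \/ j = n.+1 \/ j = n.+2 by lia.
- rewrite (sdot_antisym rho_mom pearson) sdot_p_far; last lia.
  by rewrite !p_orth ?mulr0 ?addr0 ?oppr0 //; lia.
- rewrite -cc_sdot [wdot (p n) (p n.+2)]p_orth; last lia.
  by change (wdot (p n) (p n)) with (h n); field; rewrite !h_neq0.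
- by rewrite (sdotxx rho_mom pearson) !p_orth ?mulr0 ?addr0 //; lia.
- rewrite sdot_pSp [wdot (p n.+2) (p n)]p_orth; last lia.
  by change (wdot (p n.+2) (p n.+2)) with (h n.+2); field; rewrite !h_neq0.
Qed.

Hypothesis pf_nz : forall n, (1 <= n)%N -> pfaffian (skew_moments rho f n.*2) != 0.

Lemma cc_even_neq0 k : c k.*2 != 0.
Proof.
apply/negP => /eqP c_eq0.
have gram_skew : skew_moments rho f k.+1.*2 = gram_mx sdot (fun t => 'X^t).
  apply/matrixP => i j; rewrite !mxE (sdot_omega rho_mom pearson).
  by congr zsum; apply/funext => x; rewrite !hornerXn.
have X_orth (t : 'I_k.+1.*2) : sdot 'X^t (p k.*2.+1) = 0.
  rewrite /sdot (Al_poly_p k.*2.+1) /= c_eq0 mul0r scale0r addr0 (wdotZr rho_mom) wdotC.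
  by rewrite wdot_p_deg_lt ?mulr0 // size_polyXn (ltn_ord t).
move/negP: (pf_nz (n := k.+1) isT); apply; apply/eqP; rewrite gram_skew.
have lt_odd : (k.*2.+1 < k.+1.*2)%N by rewrite doubleS.
apply: (pfaffian_gram_mx_eq0 (sdot_linear_l f g rho_mom) (sdot_linear_r f g rho_mom)
          (r := Ordinal lt_odd) (q := p k.*2.+1) (d := fun t => (p k.*2.+1)`_t)).
- by rewrite -{1}(coefK (p _)) p_size poly_def.
- exact: coef_p_diag.
- by move=> t _; rewrite (sdot_antisym rho_mom pearson) X_orth oppr0.
Qed.

Lemma Al_poly_Qeven m : A (Qeven rho f g p m) = (- c m.*2 / h m.*2.+1) *: p m.*2.+1.
Proof.
elim: m => [|m IHm]; first by rewrite Qeven0 Al_poly_p /= addr0.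
rewrite QevenS addrC Al_polyD IHm doubleS (Al_poly_p m.*2.+2) /= scalerA addrCA -scalerDl.
have -> : c m.*2.+1 / c m.*2 * (- c m.*2 / h m.*2.+1) + c m.*2.+1 / h m.*2.+1 = 0.
  by field; rewrite cc_even_neq0 hnorm_neq0.
by rewrite scale0r addr0.
Qed.

End ThreeTermRecurrence.
End OrthogonalPolynomials.

Unset Implicit Arguments.

Theorem proposition3p11 (R : realType) (rho : int -> R) (f g : {poly R})
  (p : nat -> {poly R})
  (rho_ge0 : forall x : int, 0 <= rho x)
  (rho_mom : finite_moments rho)
  (deg_f : (size f <= 3)%N) (deg_g : (size g <= 2)%N)
  (pearson : forall x : int,
     f.[(x + 1)%:~R] * rho (x + 1) - f.[x%:~R] * rho x = g.[x%:~R] * rho x)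
  (bdry : vanish_at_endpoints rho f)
  (p_monic : forall n, p n \is monic)
  (p_size : forall n, size (p n) = n.+1)
  (p_orth : forall m n, m != n ->
     zsum (fun x => (p m).[x%:~R] * (p n).[x%:~R] * rho x) = 0)
  (h_pos : forall n, 0 < hnorm rho p n)
  (pf_nz : forall n, (1 <= n)%N -> pfaffian (skew_moments rho f n.*2) != 0) :
  forall m : nat,
  [/\ (* (1) *)
      p m.*2.+1 = Q rho f g p m.*2.+1,
      (* (2) *)
      (forall y : R,
         (u rho f g p m)^-1 * Al f g (Q rho f g p m.*2.+1) y =
         (p m.*2).[y] / hnorm rho p m.*2
         + tt rho f g p m.+1 * ((p m.+1.*2).[y] / hnorm rho p m.+1.*2)),
      (* (3) *)
      p m.*2 = Q rho f g p m.*2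
               + (if m is m'.+1 then tt rho f g p m *: Q rho f g p m'.*2 else 0) &
      (* (4) *)
      (forall y : R,
         (u rho f g p m)^-1 * Al f g (Q rho f g p m.*2) y =
         - ((p m.*2.+1).[y] / hnorm rho p m.*2.+1))].
Proof.
move=> m.
have A_p := Al_poly_p rho_mom p_monic p_size p_orth h_pos pearson deg_f deg_g.
have A_Qeven := Al_poly_Qeven rho_mom p_monic p_size p_orth h_pos pearson deg_f deg_g pf_nz.
have c_neq0 := cc_even_neq0 rho_mom p_monic p_size p_orth h_pos pearson deg_f deg_g pf_nz m.
have h_neq0 := hnorm_neq0 h_pos.
split.
- by rewrite Q_odd.
- move=> y; rewrite Q_odd -horner_Al_poly A_p /= hornerD !hornerZ /u /tt doubleS.
  by field; rewrite c_neq0 !h_neq0.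
- rewrite Q_even; case: m c_neq0 => [|m] _; first by rewrite Qeven0 addr0.
  by rewrite Q_even QevenS /tt doubleS /= -addrA -scalerDl -mulrDl addrN mul0r scale0r addr0.
- move=> y; rewrite Q_even -horner_Al_poly A_Qeven hornerZ /u.
  by field; rewrite c_neq0 h_neq0.
Qed.
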